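(* Let $\Lambda\subset\mathbb{R}^3$ be a closed set of Lebesgue measure zero and let $w\in C^\infty(\mathbb{R}^3\setminus\Lambda)$ be such that $e^w\in L_{1}(\mathbb{R}^3)$ and there exist $K>0$, $q>0$ with $K^{-1}d_0(y,\Lambda)^{-q}\leq e^{w(y)}\leq K d_0(y,\Lambda)^{-q}$ for all $y\in\mathbb{R}^3\setminus\Lambda$. Then for every $x\in\mathbb{R}^3\setminus\Lambda$, $$\big((-\Delta)^{1/2}w\big)(x)\geq e^{-w(x)}\big((-\Delta)^{1/2}e^w\big)(x).$$
   Context: $d_0$ is the Euclidean distance. For $0<\alpha<1$, $L_{2\alpha}(\mathbb{R}^3)=\{h:\int_{\mathbb{R}^3}\frac{|h(x)|}{1+|x|^{3+2\alpha}}dx<\infty\}$ (here $L_1$ means the case $\alpha=1/2$). The fractional Laplacian is $(-\Delta)^{\alpha}h(x)=-d_{3,\alpha}\int_{\mathbb{R}^3}\frac{h(x+y)+h(x-y)-2h(x)}{|y|^{3+2\alpha}}dy$ for $h\in L_{2\alpha}(\mathbb{R}^3)$, with $d_{3,\alpha}>0$ the normalizing constant making the Fourier symbol $|\xi|^{2\alpha}$. *)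

From HB Require Import structures.
From mathcomp Require Import all_boot all_order all_algebra.
From mathcomp Require Import all_classical all_reals all_analysis.
Set Implicit Arguments. Unset Strict Implicit. Unset Printing Implicit Defensive.
Import Order.TTheory GRing.Theory Num.Theory.
Import numFieldNormedType.Exports.
Local Open Scope classical_set_scope.
Local Open Scope ring_scope.

Section Defs.
Variable R : realType.

Definition R3 := ((R * R) * R)%type.

Definition enorm (y : R3) : R :=
  Num.sqrt (y.1.1 ^+ 2 + y.1.2 ^+ 2 + y.2 ^+ 2).

Definition d0 (x y : R3) : R := enorm (x - y).

Definition dist_set (y : R3) (L : set R3) : R := inf [set d0 y z | z in L].

Definition leb3 := (((@lebesgue_measure R) \x (@lebesgue_measure R))
                     \x (@lebesgue_measure R))%E.

Fixpoint iter_deriv (vs : seq R3) (f : R3 -> R) : R3 -> R :=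
  match vs with
  | [::] => f
  | v :: vs' => fun x => 'D_v (iter_deriv vs' f) x
  end.

Definition smooth_on (U : set R3) (f : R3 -> R) : Prop :=
  open U /\
  (forall (vs : seq R3) (v x : R3), U x -> derivable (iter_deriv vs f) x v) /\
  (forall (vs : seq R3) (x : R3), U x -> {for x, continuous (iter_deriv vs f)}).

(* h in L_{2 alpha}(R^3) for alpha = 1/2, for h defined off the null set L:
   int |h(x)| / (1 + |x|^4) dx < oo *)
Definition L1w (L : set R3) (h : R3 -> R) : Prop :=
  leb3.-integrable (~` L) (fun x => (h x / (1 + enorm x ^+ 4))%:E).

(* d_{3,1/2} = 1/(2 pi^2), so that the symbol of (-Delta)^{1/2} is |xi| *)
Definition d3half : R := (2 * pi ^+ 2)^-1.

(* (-Delta)^{1/2} h (x), for h defined off the null set L: integrate over the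
   y with x+y, x-y off L (a conull set) *)
Definition halflap (L : set R3) (h : R3 -> R) (x : R3) : \bar R :=
  ((- d3half)%:E *
   \int[leb3]_(y in [set y | ~ L (x + y)%R /\ ~ L (x - y)%R])
      ((h (x + y) + h (x - y) - 2 * h x) / enorm y ^+ 4)%:E)%E.

End Defs.

(* By convexity of the exponential, [e^t >= 1 + t] applied to [t = w(x+y) - w(x)]
   and [t = w(x-y) - w(x)] gives, for every y,
     w(x+y) + w(x-y) - 2 w(x) <= e^{-w(x)} (e^{w(x+y)} + e^{w(x-y)} - 2 e^{w(x)}).
   Dividing by |y|^4 and integrating yields the claim, since the
   normalising factor [- d_{3,1/2}] is negative.  No integrability is needed. *)
From HB Require Import structures.
From mathcomp Require Import all_boot all_order all_algebra.
From mathcomp Require Import all_classical all_reals all_analysis.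
From mathcomp Require Import lra ring.
Import Order.TTheory GRing.Theory Num.Theory.
Import numFieldNormedType.Exports.
Import HBNNSimple.
Local Open Scope classical_set_scope.
Local Open Scope ring_scope.

Lemma gt0_muleBr (R : realType) (k : R) (x y : \bar R) : 0 < k ->
  (k%:E * (x - y) = k%:E * x - k%:E * y)%E.
Proof.
move=> k0; have [xy|] := boolP (x +? - y)%E; first exact: muleBr.
have k0E : (0 < k%:E)%E by rewrite lte_fin.
by case: x => [x| |]; case: y => [y| |] //= _;
  rewrite ?addeNy ?addNye !(muleC k%:E) ?(gt0_mulye k0E) ?(gt0_mulNye k0E).
Qed.

Section integral_without_measurability.
Local Open Scope ereal_scope.
Context d (T : measurableType d) (R : realType).
Variable mu : {measure set T -> \bar R}.
Implicit Types (D : set T) (f g : T -> \bar R).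

Lemma ge0_le_integralT f g : (forall x, 0 <= f x) -> (forall x, f x <= g x) ->
  \int[mu]_x f x <= \int[mu]_x g x.
Proof.
move=> f0 fg; have g0 x : 0 <= g x by exact: le_trans (f0 x) (fg x).
rewrite !ge0_integralTE//; apply: ge_ereal_sup => _ [h hf <-].
by apply: ereal_sup_ubound; exists h => // x; exact: le_trans (hf x) (fg x).
Qed.

Let ge0_integralZlT_le f (k : R) : (0 < k)%R -> (forall x, 0 <= f x) ->
  \int[mu]_x (k%:E * f x) <= k%:E * \int[mu]_x f x.
Proof.
move=> k0 f0; have kV0 : (0 <= k^-1)%R by rewrite invr_ge0 ltW.
have kf0 x : 0 <= k%:E * f x by rewrite mule_ge0// lee_fin ltW.
rewrite !ge0_integralTE//; apply: ge_ereal_sup => _ [h hkf <-].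
have -> : sintegral mu h = k%:E * sintegral mu (scale_nnsfun h kV0).
  by rewrite sintegralrM muleA -EFinM divff ?gt_eqF// mul1e.
rewrite lee_pmul2l ?lte_fin//; apply: ereal_sup_ubound.
exists (scale_nnsfun h kV0) => //= x.
rewrite -(@lee_pmul2l _ k%:E) ?lte_fin// -EFinM mulrA divff ?gt_eqF// mul1r.
exact: hkf.
Qed.

Lemma ge0_integralZlT f (k : R) : (0 < k)%R -> (forall x, 0 <= f x) ->
  \int[mu]_x (k%:E * f x) = k%:E * \int[mu]_x f x.
Proof.
move=> k0 f0; apply/eqP; rewrite eq_le ge0_integralZlT_le//=.
have kV0 : (0 < k^-1)%R by rewrite invr_gt0.
have kf0 x : 0 <= k%:E * f x by rewrite mule_ge0// lee_fin ltW.
rewrite -(@lee_pmul2l _ k^-1%:E) ?lte_fin// muleA -EFinM mulVf ?gt_eqF// mul1e.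
apply: le_trans _ (ge0_integralZlT_le _ _ kV0 kf0).
apply: (ge0_le_integralT _ _ f0) => x.
by rewrite muleA -EFinM mulVf ?gt_eqF// mul1e.
Qed.

Lemma le_integral_pointwise D f g : (forall x, D x -> f x <= g x) ->
  \int[mu]_(x in D) f x <= \int[mu]_(x in D) g x.
Proof.
move=> fg; rewrite (integral_mkcond D f) (integral_mkcond D g).
rewrite (integralE _ _ (f \_ D)) (integralE _ _ (g \_ D)).
have FG x : (f \_ D) x <= (g \_ D) x.
  by rewrite /patch; case: ifP => // /set_mem /fg.
apply: leeB.
- apply: (ge0_le_integralT _ _ (funepos_ge0 _)) => x.
  by rewrite !funeposE le_max2.
- apply: (ge0_le_integralT _ _ (funeneg_ge0 _)) => x.
  by rewrite !funenegE le_max2// leeN2.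
Qed.

Lemma gt0_integralZl D f (k : R) : (0 < k)%R ->
  \int[mu]_(x in D) (k%:E * f x) = k%:E * \int[mu]_(x in D) f x.
Proof.
move=> k0; rewrite integral_mkcond (integral_mkcond D f).
have -> : (fun x => k%:E * f x) \_ D = (fun x => k%:E * (f \_ D) x).
  by apply/funext => x; rewrite /patch; case: ifP; rewrite ?mule0.
rewrite integralE (integralE _ _ (f \_ D)) ge0_funeposM ?ge0_funenegM ?ltW//.
by rewrite !ge0_integralZlT// ?gt0_muleBr.
Qed.

End integral_without_measurability.

Lemma second_difference_le_expR (R : realType) (a b c : R) :
  a + b - 2 * c <= expR (- c) * (expR a + expR b - 2 * expR c).
Proof.
have := expR_ge1Dx (a - c); have := expR_ge1Dx (b - c).
rewrite !expRD => hb ha.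
have -> : expR (- c) * (expR a + expR b - 2 * expR c) =
          expR a * expR (- c) + expR b * expR (- c) - 2.
  by rewrite expRN; field; rewrite gt_eqF// expR_gt0.
lra.
Qed.

Theorem proposition5p1 (R : realType) (L : set (R3 R)) (w : R3 R -> R) :
  closed L ->
  @leb3 R L = 0%E ->
  smooth_on (~` L) w ->
  L1w L (fun y => expR (w y)) ->
  (exists K q : R, 0 < K /\ 0 < q /\
     forall y, ~ L y ->
       K^-1 * powR (dist_set y L) (- q) <= expR (w y) /\
       expR (w y) <= K * powR (dist_set y L) (- q)) ->
  forall x, ~ L x ->
    ((expR (- w x))%:E * halflap L (fun y => expR (w y)) x
       <= halflap L w x)%E.
Proof.
move=> _ _ _ _ _ x _.
have d3half_gt0 : 0 < d3half R by rewrite invr_gt0 mulr_gt0// exprn_gt0// pi_gt0.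
rewrite /halflap muleCA !EFinN !mulNe leeN2 lee_pmul2l ?lte_fin//.
rewrite -gt0_integralZl ?expR_gt0//; apply: le_integral_pointwise => y _.
rewrite -EFinM lee_fin mulrA; apply: ler_wpM2r.
  by rewrite invr_ge0 exprn_ge0// sqrtr_ge0.
exact: second_difference_le_expR.
Qed.
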